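(* Let $n=4k+2$ for some integer $k\geq 0$, and let $v\in\mathbb{Z}^n$. If $v$ is contained in an $n$-icube in $\mathbb{Z}^n$, then $|v|^2=v^Tv\in\mathbb{Z}$ is a sum of two squares of integers.
   Context: For $1\leq k\leq n$, a matrix $(v_1|\dotsc|v_k)\in\mathbb{Z}^{n\times k}$ is a $k$-icube in $\mathbb{Z}^n$ of norm $\lambda>0$ if $v_i^Tv_j=\lambda$ for $i=j$ and $v_i^Tv_j=0$ for $i\neq j$. A vector $v$ is ''contained in'' an $n$-icube if it is one of the columns of some $n$-icube. *)

From mathcomp Require Import all_boot all_order all_algebra.
Set Implicit Arguments. Unset Strict Implicit. Unset Printing Implicit Defensive.
Import Order.TTheory GRing.Theory Num.Theory.
Local Open Scope ring_scope.

Definition icube (n k : nat) (lam : int) (M : 'M[int]_(n, k)) : Prop :=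
  0 < lam /\ forall i j : 'I_k, (M^T *m M) i j = (if i == j then lam else 0).

Definition in_icube (n : nat) (v : 'cV[int]_n) : Prop :=
  exists (lam : int) (M : 'M[int]_(n, n)) (j : 'I_n), icube lam M /\ col j M = v.

From mathcomp Require Import all_boot all_order all_algebra all_field.
From mathcomp Require Import cyclic zify ring.
Import Order.TTheory GRing.Theory Num.Theory.
Set Implicit Arguments. Unset Strict Implicit. Unset Printing Implicit Defensive.
Local Open Scope ring_scope.

(* If v is column j of an n-icube M of norm lam, then M^T M = lam I and
   |v|^2 = lam, so by the two-squares theorem it suffices that every prime
   p = 3 (mod 4) divides lam to an even power.  Write n = 2m with m odd and
   M = L D R in Smith normal form, so that D (L^T L) D = lam (R^-T R^-1).
   If lam had p-adic valuation 2f + 1, then according as p^(f+1) divides the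
   m-th invariant factor or not, the last m rows of R^-T or the first m rows
   of L^T would span a totally isotropic subspace of dimension m in F_p^(2m).
   A Gram matrix of full rank with an m x m zero diagonal block has
   determinant -(det X)^2 since m is odd; being also a nonzero square, it
   makes -1 a square modulo p, which is impossible for p = 3 (mod 4). *)

Definition sum2sq (z : int) : Prop := exists a b : int, z = a ^+ 2 + b ^+ 2.

Lemma sum2sq_sqr a : sum2sq (a ^+ 2).
Proof. by exists a, 0; rewrite expr0n addr0. Qed.

Lemma sum2sqM x y : sum2sq x -> sum2sq y -> sum2sq (x * y).
Proof.
move=> [a [b ->]] [c [d ->]].
by exists (a * c - b * d), (a * d + b * c); ring.
Qed.

Lemma sum2sqX x e : sum2sq x -> sum2sq (x ^+ e).
Proof.
move=> sx; elim: e => [|e IHe]; first by rewrite expr0 -(expr1n int 2); apply: sum2sq_sqr.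
by rewrite exprS; apply: sum2sqM.
Qed.

Lemma Fp_expp p (y : 'F_p) : prime p -> y ^+ p = y.
Proof. by move=> p_pr; rewrite -[X in _ ^+ X](card_Fp p_pr) expf_card. Qed.

Lemma Fp_sqr_neqN1 p (x : 'F_p) : prime p -> (p %% 4 = 3)%N -> x ^+ 2 != -1.
Proof.
move=> p_pr p3; apply/eqP=> xx.
have x4 : x ^+ 4 = 1 by rewrite (exprM x 2 2) xx sqrrN expr1n.
have pE : (p %/ 4 * 4 + 3)%N = p by rewrite {2}(divn_eq p 4) p3.
have : x ^+ (p %/ 4 * 4 + 3) = x by rewrite pE Fp_expp.
rewrite exprD mulnC exprM x4 expr1n mul1r (exprS _ 2) xx mulrN1.
move/eqP; rewrite eq_sym -subr_eq0 opprK -mulr2n -mulr_natr mulf_eq0 => /orP[/eqP x0|].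
  by move: xx; rewrite x0 expr0n /= => /eqP; rewrite eq_sym oppr_eq0 oner_eq0.
by rewrite -(dvdn_pcharf (pchar_Fp p_pr)) => /dvdn_leq; have := prime_gt1 p_pr; lia.
Qed.

Lemma Fp_sqrtN1 p : prime p -> (p %% 4 = 1)%N -> exists x : 'F_p, x ^+ 2 = -1.
Proof.
move=> p_pr p1; set t := (p %/ 4)%N.
have pE : p.-1 = (4 * t)%N by rewrite {1}(divn_eq p 4) p1 addn1 mulnC.
have t_gt0 : (0 < t)%N by have := prime_gt1 p_pr; lia.
set rs := enum [pred y : 'F_p | y != 0].
have rs_roots : all (p.-1).-unity_root rs.
  apply/allP => y; rewrite mem_enum inE => y0; rewrite unity_rootE; apply/eqP.
  apply: (mulIf y0); rewrite mul1r -exprSr prednK ?prime_gt0 //.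
  exact: Fp_expp.
have : has (p.-1).-primitive_root rs.
  apply: has_prim_root rs_roots (enum_uniq _) _; first by rewrite pE muln_gt0.
  by rewrite -cardE cardC1 card_Fp.
rewrite pE => /hasP[z _ z_prim]; exists (z ^+ t).
have : (z ^+ (2 * t)) ^+ 2 == 1 by rewrite -exprM mulnC mulnA prim_expr_order.
rewrite sqrf_eq1 => /orP[/eqP z1|/eqP]; last by rewrite -exprM mulnC.
have := prim_order_dvd z_prim (2 * t); rewrite z1 eqxx => /dvdn_leq; lia.
Qed.

Lemma Thue n x c : (0 < n)%N -> (n < c * c)%N ->
  exists u v : int, [/\ (u != 0) || (v != 0), `|u| < c%:Z, `|v| < c%:Z
                      & (n%:Z %| u + x%:Z * v)%Z].
Proof.
move=> n_gt0 ncc.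
pose g (ab : 'I_c * 'I_c) : 'I_n := Ordinal (ltn_pmod (ab.1 + x * ab.2) n_gt0).
have : ~~ injectiveb g.
  by apply/negP => /injectiveP/leq_card; rewrite card_prod !card_ord; lia.
case/injectivePn => [[a1 b1] [[a2 b2] ne12 g12]].
exists (a1%:Z - a2%:Z), (b1%:Z - b2%:Z); split.
- by move: ne12; rewrite xpair_eqE negb_and !subr_eq0 !eqz_nat.
- have := ltn_ord a1; have := ltn_ord a2; lia.
- have := ltn_ord b1; have := ltn_ord b2; lia.
have /= g12' := congr1 val g12.
suff -> : a1%:Z - a2%:Z + x%:Z * (b1%:Z - b2%:Z) = (a1 + x * b1)%N%:Z - (a2 + x * b2)%N%:Z.
  by rewrite -eqz_mod_dvd !modz_nat g12'.
by rewrite !PoszD !PoszM; ring.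
Qed.

Lemma prime_between_squares p : prime p -> exists2 c, (p < c * c)%N & (c.-1 * c.-1 < p)%N.
Proof.
move=> p_pr; have exc : exists c, (p < c * c)%N.
  by exists p; rewrite ltn_Pmull ?prime_gt1 ?prime_gt0.
case: (ex_minnP exc) => c p_lt_cc c_min; exists c => //.
rewrite ltn_neqAle; apply/andP; split; last first.
  by rewrite leqNgt; apply/negP => /c_min; lia.
apply: contraTneq p_pr => <-; apply/negP.
by case/primeP => ss_gt1 /(_ c.-1 (dvdn_mulr _ (dvdnn _)))/orP[]/eqP; nia.
Qed.

Lemma dvdz_eq_lt2 (d N : int) : 0 < N < 2 * d -> (d %| N)%Z -> N = d.
Proof.
case/andP=> N_gt0 N_lt /dvdzP[k NE]; rewrite NE in N_gt0 N_lt *.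
have d_gt0 : 0 < d by lia.
have k_gt0 : 0 < k by rewrite -(pmulr_lgt0 _ d_gt0).
have k_lt2 : k < 2 by rewrite -(ltr_pM2r d_gt0).
by rewrite (_ : k = 1) ?mul1r //; lia.
Qed.

Lemma sum2sq_prime_mod4_1 p : prime p -> (p %% 4 = 1)%N -> sum2sq p.
Proof.
move=> p_pr p1; have [x xx] := Fp_sqrtN1 p_pr p1.
have p_dvd_xx : (p%:Z %| x%:Z ^+ 2 + 1)%Z.
  rewrite (dvdz_pcharf (pchar_Fp p_pr)) rmorphD rmorphXn rmorph1.
  by rewrite -[X in X ^+ 2]/((x : nat)%:R) natr_Zp xx addNr.
have [c p_lt_cc cc_lt_p] := prime_between_squares p_pr.
(* With |u|, |v| < sqrt p and u = -x v (mod p), u^2 + v^2 is a multiple of p below 2p. *)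
have [u [v [uv_neq0 u_lt_c v_lt_c p_dvd_uxv]]] := Thue x (prime_gt0 p_pr) p_lt_cc.
exists u, v; apply/esym/dvdz_eq_lt2.
  have sqr_le (w : int) : `|w| < c%:Z -> w ^+ 2 <= (c.-1 * c.-1)%N%:Z by clear -w; nia.
  have sqr_gt0 (w : int) : w != 0 -> 0 < w ^+ 2 by clear -w; nia.
  have := sqr_le _ u_lt_c; have := sqr_le _ v_lt_c; move: cc_lt_p; rewrite -ltz_nat.
  case/orP: uv_neq0 => /sqr_gt0; have := sqr_ge0 u; have := sqr_ge0 v;
    by move: (u ^+ 2) (v ^+ 2) => U V; lia.
have -> : u ^+ 2 + v ^+ 2 = (u + x%:Z * v) * (u - x%:Z * v) + v ^+ 2 * (x%:Z ^+ 2 + 1).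
  by ring.
by apply: rpredD; [apply: dvdz_mulr | apply: dvdz_mull].
Qed.

Lemma sum2sq_prime p : prime p -> (p %% 4 != 3)%N -> sum2sq p.
Proof.
move=> p_pr p_n3; have [->|p_odd] := even_prime p_pr; first by exists 1, 1.
apply: sum2sq_prime_mod4_1 => //; move: (modn2 p) p_n3; rewrite p_odd; lia.
Qed.

Lemma sum2sq_nat n : (0 < n)%N ->
  (forall p, prime p -> (p %% 4 = 3)%N -> ~~ odd (logn p n)) -> sum2sq n.
Proof.
move=> n_gt0 even_log.
rewrite (prod_prime_decomp n_gt0) prime_decompE big_map big_seq /=.
rewrite (big_morph Posz PoszM (erefl 1%:Z)).
apply: (big_ind sum2sq); [by exists 1, 0 | exact: sum2sqM | move=> p].
rewrite mem_primes => /and3P[p_pr _ _]; rewrite -natz natrX natz.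
case: (p %% 4 =P 3)%N => [p3|/eqP p_n3]; last exact/sum2sqX/sum2sq_prime.
move/negPf: (even_log p p_pr p3) => log_even.
by rewrite -(odd_double_half (logn p n)) log_even add0n -muln2 exprM; apply: sum2sq_sqr.
Qed.

Section SwapBlocks.
Variables (R : comNzRingType) (m : nat).

Definition swap_mx : 'M[R]_(m + m) := block_mx 0 1%:M 1%:M 0.

Lemma tr_swap_mx : swap_mx^T = swap_mx.
Proof. by rewrite tr_block_mx !trmx0 trmx1. Qed.

Lemma mul_block_swap_mx (A B C D : 'M[R]_m) :
  block_mx A B C D *m swap_mx = block_mx B A D C.
Proof. by rewrite mulmx_block !(mulmx1, mulmx0, addr0, add0r). Qed.

Lemma mul_swap_mx_block (A B C D : 'M[R]_m) :
  swap_mx *m block_mx A B C D = block_mx C D A B.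
Proof. by rewrite mulmx_block !(mul1mx, mul0mx, addr0, add0r). Qed.

Lemma det_swap_mx : \det swap_mx = (-1) ^+ m.
Proof.
have -> : swap_mx = block_mx 1%:M 1%:M 0 1%:M *m block_mx 1%:M 0 (-1%:M) 1%:M *m
                    block_mx 1%:M 1%:M 0 1%:M *m block_mx (-1%:M) 0 0 1%:M.
  rewrite !mulmx_block !(mulmx1, mul1mx, mulmx0, mul0mx, addr0, add0r, mulNmx, mulmxN).
  by rewrite subrr oppr0 add0r opprK addNr.
have -> : - 1%:M = (-1)%:M :> 'M[R]_m by apply/matrixP=> i j; rewrite !mxE mulNrn.
by rewrite !det_mulmx !det_ublock det_lblock !det_scalar !expr1n !(mul1r, mulr1).
Qed.

Lemma det_block_ul0 (X Y Z : 'M[R]_m) :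
  \det (block_mx 0 X Z Y) = (-1) ^+ m * \det X * \det Z.
Proof.
have := congr1 determinant (mul_block_swap_mx 0 X Z Y).
rewrite det_mulmx det_swap_mx det_lblock -mulrA => <-.
by rewrite mulrCA -exprD -signr_odd oddD addbb mulr1.
Qed.
End SwapBlocks.

Lemma sqrtN1_of_gram_ulsub0 (F : fieldType) m (P : 'M[F]_(m + m)) :
  odd m -> P \in unitmx -> ulsubmx (P *m P^T) = 0 -> exists x : F, x ^+ 2 = -1.
Proof.
move=> m_odd P_unit; set G := P *m P^T => G_ul0.
have G_sym : G^T = G by rewrite trmx_mul trmxK.
set X := ursubmx G.
have G_dl : dlsubmx G = X^T by rewrite trmx_ursub G_sym.
have detG : \det G = - \det X ^+ 2.
  rewrite -[G]submxK G_ul0 G_dl det_block_ul0 det_tr.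
  by rewrite -signr_odd m_odd expr1 mulN1r mulNr.
have detG_sqr : \det G = \det P ^+ 2 by rewrite det_mulmx det_tr expr2.
have detP_neq0 : \det P != 0 by rewrite -unitfE -unitmxE.
have detX_neq0 : \det X != 0.
  apply: contra detP_neq0 => /eqP X0.
  by rewrite -(sqrf_eq0 (\det P)) -detG_sqr detG X0 expr0n oppr0.
exists (\det P / \det X); rewrite expr_div_n -detG_sqr detG mulNr divff //.
by rewrite expf_neq0.
Qed.

Lemma sqrtN1_of_gram_drsub0 (F : fieldType) m (P : 'M[F]_(m + m)) :
  odd m -> P \in unitmx -> drsubmx (P *m P^T) = 0 -> exists x : F, x ^+ 2 = -1.
Proof.
move=> m_odd P_unit G_dr0; apply: (@sqrtN1_of_gram_ulsub0 _ _ (swap_mx F m *m P)) => //.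
  by rewrite unitmx_mul P_unit unitmxE det_swap_mx unitrX ?unitrN1.
rewrite trmx_mul tr_swap_mx mulmxA -(mulmxA (swap_mx F m)) -[P *m P^T]submxK.
by rewrite mul_swap_mx_block mul_block_swap_mx block_mxKul.
Qed.

Lemma map_unitmx_intr (R : comUnitRingType) n (A : 'M[int]_n) :
  A \in unitmx -> map_mx (intr : int -> R) A \in unitmx.
Proof. by rewrite !unitmxE det_map_mx; apply: rmorph_unit. Qed.

Lemma Fp_sqrtN1_of_gram p m (A : 'M[int]_(m + m)) : prime p -> odd m -> A \in unitmx ->
  (forall i j, p%:Z %| (A^T *m A) (lshift m i) (lshift m j))%Z \/
  (forall i j, p%:Z %| (A^T *m A) (rshift m i) (rshift m j))%Z ->
  exists x : 'F_p, x ^+ 2 = -1.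
Proof.
move=> p_pr m_odd A_unit blk_dvd.
set P := map_mx (intr : int -> 'F_p) A^T.
have P_unit : P \in unitmx by rewrite map_unitmx_intr ?unitmx_tr.
have PPE : P *m P^T = map_mx intr (A^T *m A) by rewrite map_trmx trmxK map_mxM.
have modp0 (B : 'M[int]_m) : (forall i j, p%:Z %| B i j)%Z -> map_mx (intr : int -> 'F_p) B = 0.
  move=> B_dvd; apply/matrixP => i j; rewrite !mxE; apply/eqP.
  by rewrite -(dvdz_pcharf (pchar_Fp p_pr)).
case: blk_dvd => blk_dvd.
  apply: (sqrtN1_of_gram_ulsub0 m_odd P_unit); rewrite PPE -map_ulsubmx.
  by apply: modp0 => i j; rewrite ulsubmxEsub mxE; apply: blk_dvd.
apply: (sqrtN1_of_gram_drsub0 m_odd P_unit); rewrite PPE -map_drsubmx.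
by apply: modp0 => i j; rewrite drsubmxEsub mxE; apply: blk_dvd.
Qed.

Lemma logn_abszM p (x y : int) : x != 0 -> y != 0 ->
  logn p `|x * y| = (logn p `|x| + logn p `|y|)%N.
Proof. by move=> x0 y0; rewrite abszM lognM ?absz_gt0. Qed.

Lemma prime_dvdz_mid p f (a g b l h : int) : prime p -> l != 0 ->
  logn p `|l| = f.*2.+1 -> ~~ ((p ^ f.+1)%:Z %| a)%Z -> ~~ ((p ^ f.+1)%:Z %| b)%Z ->
  a * g * b = l * h -> (p%:Z %| g)%Z.
Proof.
move=> p_pr l_neq0 logl a_ndvd b_ndvd agbE.
have [->|g_neq0] := eqVneq g 0; first exact: dvdz0.
have a_neq0 : a != 0 by apply: contraNneq a_ndvd => ->; apply: dvdz0.
have b_neq0 : b != 0 by apply: contraNneq b_ndvd => ->; apply: dvdz0.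
have h_neq0 : h != 0.
  by apply: contra_eq_neq agbE => ->; rewrite mulr0 !mulf_neq0.
rewrite !dvdzE !absz_nat !pfactor_dvdn ?absz_gt0 // -!ltnNge in a_ndvd b_ndvd.
rewrite dvdzE absz_nat -(expn1 p) pfactor_dvdn ?absz_gt0 //.
have := congr1 (logn p \o absz) agbE.
rewrite /= !logn_abszM ?mulf_neq0 // logl; lia.
Qed.

Lemma prime_dvdz_cofactor p f (a g b l h : int) : prime p -> l != 0 ->
  logn p `|l| = f.*2.+1 -> ((p ^ f.+1)%:Z %| a)%Z -> ((p ^ f.+1)%:Z %| b)%Z ->
  a * g * b = l * h -> (p%:Z %| h)%Z.
Proof.
move=> p_pr l_neq0 logl a_dvd b_dvd agbE.
have [->|h_neq0] := eqVneq h 0; first exact: dvdz0.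
have lh_dvd : ((p ^ f.+1 * p ^ f.+1)%N%:Z %| l * h)%Z.
  by rewrite -agbE mulrAC PoszM; apply/dvdz_mulr/dvdz_mul.
rewrite dvdzE absz_nat -expnD pfactor_dvdn ?absz_gt0 ?mulf_neq0 // in lh_dvd.
rewrite dvdzE absz_nat -(expn1 p) pfactor_dvdn ?absz_gt0 //.
move: lh_dvd; rewrite logn_abszM // logl; lia.
Qed.

Lemma sorted_dvdz_nth (d : seq int) i j : sorted dvdz d -> (i <= j)%N -> (d`_i %| d`_j)%Z.
Proof.
move=> d_sorted le_ij; have [lt_jd|le_dj] := ltnP j (size d).
  by apply: (sorted_leq_nth dvdz_trans dvdzz) => //; rewrite inE (leq_ltn_trans le_ij).
by rewrite nth_default ?dvdz0.
Qed.

Lemma Smith_gram_scalar n (M : 'M[int]_n) (lam : int) : M^T *m M = lam%:M ->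
  exists (L Q : 'M[int]_n) (d : seq int), [/\ L \in unitmx, Q \in unitmx, sorted dvdz d &
    forall i j : 'I_n, d`_i * (L^T *m L) i j * d`_j = lam * (Q^T *m Q) i j].
Proof.
move=> MM; have [L L_unit [R R_unit [d d_sorted ME]]] := int_Smith_normal_form M.
set D := \matrix_(i, j) _ in ME.
have DE : D = diag_mx (\row_i d`_i) by apply/matrixP => i j; rewrite !mxE.
have DGD : D *m (L^T *m L) *m D = lam *: ((invmx R)^T *m invmx R).
  have := congr1 (fun X => (invmx R)^T *m X *m invmx R) MM.
  rewrite /= ME !trmx_mul !mulmxA -trmx_mul mulmxV // trmx1 mul1mx.
  rewrite DE tr_diag_mx -!mulmxA mulmxV // mulmx1 => ->.
  by rewrite mul_scalar_mx scalemxAr.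
exists L, (invmx R), d; split; rewrite ?unitmx_inv // => i j.
have := congr1 (fun X : 'M[int]_n => X i j) DGD.
by rewrite DE mul_mx_diag mul_diag_mx !mxE.
Qed.

Lemma logn_gram_scalar_even m (M : 'M[int]_(m + m)) (lam : int) p :
  odd m -> lam != 0 -> M^T *m M = lam%:M -> prime p -> (p %% 4 = 3)%N ->
  ~~ odd (logn p `|lam|).
Proof.
move=> m_odd lam_neq0 MM p_pr p3; apply/negP => log_odd.
set f := (logn p `|lam|)./2.
have logE : logn p `|lam| = f.*2.+1 by rewrite -[LHS]odd_double_half log_odd.
have [L [Q [d [L_unit Q_unit d_sorted dGd]]]] := Smith_gram_scalar MM.
suff [x] : exists x : 'F_p, x ^+ 2 = -1 by apply/eqP/Fp_sqr_neqN1.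
have [q_dvd|q_ndvd] := boolP ((p ^ f.+1)%:Z %| d`_m.-1)%Z.
  apply: (Fp_sqrtN1_of_gram p_pr m_odd Q_unit); right => i j.
  have q_dvd_d (k : 'I_m) : ((p ^ f.+1)%:Z %| d`_(rshift m k))%Z.
    by apply: dvdz_trans q_dvd _; apply: sorted_dvdz_nth => //=; lia.
  exact: prime_dvdz_cofactor p_pr lam_neq0 logE (q_dvd_d i) (q_dvd_d j) (dGd _ _).
apply: (Fp_sqrtN1_of_gram p_pr m_odd L_unit); left => i j.
have q_ndvd_d (k : 'I_m) : ~~ ((p ^ f.+1)%:Z %| d`_(lshift m k))%Z.
  apply: contra q_ndvd => /dvdz_trans; apply; apply: sorted_dvdz_nth => //=.
  by have := ltn_ord k; lia.
exact: prime_dvdz_mid p_pr lam_neq0 logE (q_ndvd_d i) (q_ndvd_d j) (dGd _ _).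
Qed.

Lemma icube_gram n k lam (M : 'M[int]_(n, k)) : icube lam M -> M^T *m M = lam%:M.
Proof. by case=> _ MM; apply/matrixP => i j; rewrite MM !mxE; case: eqP. Qed.

Lemma gram_col n k (M : 'M[int]_(n, k)) j :
  ((col j M)^T *m col j M) 0 0 = (M^T *m M) j j.
Proof. by rewrite !mxE; apply: eq_bigr => i _; rewrite !mxE. Qed.

Theorem mainTheorem1 (k : nat) (v : 'cV[int]_(4 * k + 2)) :
  in_icube v ->
  exists a b : int, (v^T *m v) 0 0 = a ^+ 2 + b ^+ 2.
Proof.
case=> lam [M [j [M_icube <-]]]; have lam_gt0 := M_icube.1.
rewrite gram_col (icube_gram M_icube) mxE eqxx mulr1n.
have -> : lam = `|lam|%N by rewrite abszE gtr0_norm.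
apply: sum2sq_nat => [|p p_pr p3]; first by rewrite absz_gt0 gt_eqF.
move: M M_icube; rewrite (_ : (4 * k + 2 = (2 * k + 1) + (2 * k + 1))%N); last lia.
move=> M /icube_gram MM; apply: logn_gram_scalar_even MM p_pr p3; last by rewrite gt_eqF.
by rewrite addn1 /= oddM.
Qed.
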